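(* Let $p$ be an idempotent in $(\beta\mathbb{N}, +)$, let $\langle C_n \rangle_{n=1}^\infty$ be a sequence of members of $p$, and let $\langle a_n \rangle_{n=1}^\infty$ be a sequence in $\mathbb{N}$. Then for each $n \in \mathbb{N}$ there exists a finite sequence $Y_n = \langle y_{n,j}\rangle_{j=1}^{a_n}$ in $\mathbb{N}$ of length $a_n$ with $\mathrm{FS}(Y_n) \subseteq C_n$, such that for every nonempty finite $F \subseteq \mathbb{N}$, $\sum_{n \in F} Y_n \subseteq C_{\min F}$.
   Context: $\beta\mathbb{N}$ is the set of ultrafilters on $\mathbb{N}$ with the extension of addition $p+q = \{A \subseteq \mathbb{N} : \{x : -x+A \in q\} \in p\}$, $-x+A=\{y: x+y\in A\}$; $p$ is idempotent if $p+p=p$. For a finite sequence $\langle x_n\rangle_{n=1}^k$, $\mathrm{FS}(\langle x_n\rangle_{n=1}^k) = \{\sum_{n\in H} x_n : \emptyset\neq H\subseteq\{1,\ldots,k\}\}$. For finite $F \subseteq \mathbb{N}$ and sequences $Y_n$, $\sum_{n \in F} Y_n = \{\sum_{n \in F} a_n : a_n \text{ is a term of } Y_n \text{ for each } n \in F\}$. *)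

(* The paper's N = {1,2,3,...}; we model subsets of N as
   predicates on nat, and ultrafilters on N as families of such predicates
   that contain the set of positive naturals (so they live on N). *)
From Stdlib Require Import Arith.

Definition is_ultrafilter (p : (nat -> Prop) -> Prop) : Prop :=
  p (fun n => 1 <= n) /\
  ~ p (fun _ => False) /\
  (forall A B : nat -> Prop, (forall x, A x -> B x) -> p A -> p B) /\
  (forall A B : nat -> Prop, p A -> p B -> p (fun x => A x /\ B x)) /\
  (forall A : nat -> Prop, p A \/ p (fun x => ~ A x)).

Definition shift_set (x : nat) (A : nat -> Prop) : nat -> Prop :=
  fun y => A (x + y).

Definition ultra_add (p q : (nat -> Prop) -> Prop) : (nat -> Prop) -> Prop :=
  fun A => p (fun x => 1 <= x /\ q (shift_set x A)).

Definition idempotent (p : (nat -> Prop) -> Prop) : Prop :=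
  forall A : nat -> Prop, ultra_add p p A <-> p A.

Fixpoint sum_1_to (n : nat) (f : nat -> nat) : nat :=
  match n with
  | 0 => 0
  | S m => sum_1_to m f + f (S m)
  end.

(* FS(<y_j>_{j=1}^k) ⊆ C: for every nonempty H ⊆ {1..k}
   (given by a boolean indicator), sum_{j in H} y_j ∈ C. *)
Definition FS_sub (k : nat) (y : nat -> nat) (C : nat -> Prop) : Prop :=
  forall H : nat -> bool,
    (exists j, 1 <= j <= k /\ H j = true) ->
    C (sum_1_to k (fun j => if H j then y j else 0)).

From Stdlib Require Import Arith Lia Classical ClassicalEpsilon.

(* Idempotence of p says that for A in p the set A* = {x in A : -x + A in p} is again
   in p, and that -x + A* is in p for every x in A*.  Hence one can choose a decreasing
   tower T_0 ⊇ T_1 ⊇ ... of members of p and points x_t in T_t with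
   T_(t+1) ⊆ T_t ∩ (-x_t + T_t) ∩ D_(t+1), where D_i = C_1 ∩ ... ∩ C_(i+1); then every
   finite sum of the x_t with indices >= i lies in T_i ⊆ D_i.  The Y_n are consecutive
   blocks of the single sequence x, Y_n starting at index s_n = a_1 + ... + a_(n-1) >= n - 1,
   so a sum over F with minimum m lands in T_(s_m) ⊆ D_(s_m) ⊆ C_m. *)

Fixpoint sum_range (lo l : nat) (f : nat -> nat) : nat :=
  match l with 0 => 0 | S l' => f lo + sum_range (S lo) l' f end.

Lemma sum_range_last lo l f : sum_range lo (S l) f = sum_range lo l f + f (lo + l).
Proof.
  revert lo; induction l as [|l IHl]; intros lo; simpl.
  - now rewrite !Nat.add_0_r.
  - simpl in IHl; rewrite IHl.
    replace (S lo + l) with (lo + S l) by lia; lia.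
Qed.

Lemma sum_1_to_range N f : sum_1_to N f = sum_range 1 N f.
Proof.
  induction N as [|N IHN]; [reflexivity|].
  now rewrite sum_range_last, <-IHN.
Qed.

Lemma sum_range_split lo l1 l2 f :
  sum_range lo (l1 + l2) f = sum_range lo l1 f + sum_range (lo + l1) l2 f.
Proof.
  revert lo; induction l1 as [|l1 IHl1]; intros lo; simpl.
  - now rewrite Nat.add_0_r.
  - rewrite IHl1.
    replace (S lo + l1) with (lo + S l1) by lia; lia.
Qed.

Lemma sum_range_zero lo l f :
  (forall k, lo <= k < lo + l -> f k = 0) -> sum_range lo l f = 0.
Proof.
  revert lo; induction l as [|l IHl]; intros lo Hf; simpl; [reflexivity|].
  rewrite Hf, IHl; [reflexivity|intros k Hk; apply Hf; lia|lia].
Qed.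

Lemma term_le_sum_range lo l f k : lo <= k < lo + l -> f k <= sum_range lo l f.
Proof.
  revert lo; induction l as [|l IHl]; intros lo Hk; simpl; [lia|].
  destruct (Nat.eq_dec k lo) as [->|Hne]; [lia|].
  specialize (IHl (S lo) ltac:(lia)); lia.
Qed.

Section IdempotentUltrafilter.

Variable p : (nat -> Prop) -> Prop.
Hypothesis p_uf : is_ultrafilter p.

Lemma uf_mono A B : (forall x, A x -> B x) -> p A -> p B.
Proof. destruct p_uf as (_ & _ & Hmono & _); apply Hmono. Qed.

Lemma uf_inter A B : p A -> p B -> p (fun x => A x /\ B x).
Proof. destruct p_uf as (_ & _ & _ & Hinter & _); apply Hinter. Qed.

Lemma uf_nonempty A : p A -> exists x, A x.
Proof.
  intros HA; apply NNPP; intros Hempty.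
  destruct p_uf as (_ & Hnot_empty & _); apply Hnot_empty.
  apply (uf_mono A); [|exact HA].
  intros x Ax; apply Hempty; now exists x.
Qed.

Lemma uf_bounded_inter (C : nat -> nat -> Prop) :
  (forall n, 1 <= n -> p (C n)) ->
  forall i, p (fun x => forall n, 1 <= n <= S i -> C n x).
Proof.
  intros HC i; induction i as [|i IHi].
  - apply (uf_mono (C 1)); [|apply HC; lia].
    intros x Hx n Hn; now replace n with 1 by lia.
  - apply (uf_mono (fun x => (forall n, 1 <= n <= S i -> C n x) /\ C (S (S i)) x)).
    + intros x [Hlow Hlast] n Hn.
      destruct (Nat.eq_dec n (S (S i))) as [->|Hne]; [exact Hlast|].
      apply Hlow; lia.
    + apply uf_inter; [exact IHi|apply HC; lia].
Qed.

Definition pick (A : nat -> Prop) : nat := epsilon (inhabits 0) A.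

Lemma pick_spec A : p A -> A (pick A).
Proof. intros HA; unfold pick; apply epsilon_spec, uf_nonempty, HA. Qed.

Hypothesis p_idem : idempotent p.

Definition star (A : nat -> Prop) : nat -> Prop :=
  fun x => A x /\ 1 <= x /\ p (shift_set x A).

Definition shift_closed (S : nat -> Prop) : Prop :=
  forall x, S x -> p (shift_set x S).

Lemma star_mem A : p A -> p (star A).
Proof.
  intros HA; apply uf_inter; [exact HA|].
  exact (proj2 (p_idem A) HA).
Qed.

Lemma star_shift_closed A : shift_closed (star A).
Proof.
  intros x (Ax & _ & Hshift).
  apply (uf_mono (fun y => shift_set x A y /\ 1 <= y /\ p (shift_set y (shift_set x A)))).
  - intros y (Hy & Hy1 & Hyshift); unfold shift_set in *.
    repeat split; [exact Hy|lia|].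
    revert Hyshift; apply uf_mono; intros z; now rewrite Nat.add_assoc.
  - apply uf_inter; [exact Hshift|exact (proj2 (p_idem _) Hshift)].
Qed.

Lemma shift_closed_shift S x : shift_closed S -> S x -> shift_closed (shift_set x S).
Proof.
  intros HS Sx y Hy; unfold shift_set in *.
  apply HS in Hy; revert Hy; apply uf_mono; intros z; now rewrite Nat.add_assoc.
Qed.

Lemma shift_closed_inter A B :
  shift_closed A -> shift_closed B -> shift_closed (fun x => A x /\ B x).
Proof. intros HA HB x [Ax Bx]; apply uf_inter; [apply HA|apply HB]; assumption. Qed.

Variable D : nat -> nat -> Prop.
Hypothesis D_mem : forall i, p (D i).

Fixpoint tower (t : nat) : nat -> Prop :=
  match t with
  | 0 => star (D 0)
  | S t' => fun y => (tower t' y /\ tower t' (pick (tower t') + y)) /\ star (D (S t')) y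
  end.

Definition tower_elt (t : nat) : nat := pick (tower t).

Lemma tower_mem_shift_closed t : p (tower t) /\ shift_closed (tower t).
Proof.
  induction t as [|t [Hmem Hclosed]]; simpl.
  - split; [apply star_mem, D_mem|apply star_shift_closed].
  - pose proof (pick_spec _ Hmem) as Hpick.
    split.
    + apply uf_inter; [apply uf_inter|apply star_mem, D_mem]; [exact Hmem|].
      exact (Hclosed _ Hpick).
    + apply shift_closed_inter; [apply shift_closed_inter|apply star_shift_closed];
        [exact Hclosed|].
      exact (shift_closed_shift _ _ Hclosed Hpick).
Qed.

Lemma tower_elt_in t : tower t (tower_elt t).
Proof. unfold tower_elt; apply pick_spec, tower_mem_shift_closed. Qed.

Lemma tower_antitone i j : i <= j -> forall y, tower j y -> tower i y.
Proof.
  induction 1 as [|j _ IH]; intros y Hy; [exact Hy|].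
  apply IH; simpl in Hy; tauto.
Qed.

Lemma tower_succ_shift i y : tower (S i) y -> tower i (tower_elt i + y).
Proof. simpl; tauto. Qed.

Lemma tower_sub i y : tower i y -> D i y /\ 1 <= y.
Proof. destruct i; simpl; unfold star; tauto. Qed.

Lemma tower_elt_pos t : 1 <= tower_elt t.
Proof. exact (proj2 (tower_sub _ _ (tower_elt_in t))). Qed.

(* The k-th summand is x_(e k) with e k in the block [r k, r (S k)); consecutive blocks
   make the indices increase, which is what the tower needs. *)
Lemma block_sum_zero_or_in_tower (r e : nat -> nat) (F : nat -> bool) l : forall lo,
  (forall k, r k <= r (S k)) ->
  (forall k, lo <= k < lo + l -> F k = true -> r k <= e k < r (S k)) ->
  sum_range lo l (fun k => if F k then tower_elt (e k) else 0) = 0 \/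
  tower (r lo) (sum_range lo l (fun k => if F k then tower_elt (e k) else 0)).
Proof.
  induction l as [|l IHl]; intros lo Hr Hblock; simpl; [now left|].
  destruct (IHl (S lo) Hr) as [Hzero|Htail];
    [intros k Hk; apply Hblock; lia| |];
    destruct (F lo) eqn:HF; try (now left); right.
  - specialize (Hblock lo ltac:(lia) HF).
    rewrite Hzero, Nat.add_0_r.
    apply (tower_antitone _ (e lo)); [lia|apply tower_elt_in].
  - specialize (Hblock lo ltac:(lia) HF).
    apply (tower_antitone _ (e lo)); [lia|apply tower_succ_shift].
    apply (tower_antitone _ (r (S lo))); [lia|exact Htail].
  - apply (tower_antitone _ (r (S lo))); [apply Hr|exact Htail].
Qed.

Lemma block_sum_in_tower (r e : nat -> nat) (F : nat -> bool) lo l k0 :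
  (forall k, r k <= r (S k)) ->
  (forall k, lo <= k < lo + l -> F k = true -> r k <= e k < r (S k)) ->
  lo <= k0 < lo + l -> F k0 = true ->
  tower (r lo) (sum_range lo l (fun k => if F k then tower_elt (e k) else 0)).
Proof.
  intros Hr Hblock Hk0 HF.
  destruct (block_sum_zero_or_in_tower r e F l lo Hr Hblock) as [Hzero|Hin]; [|exact Hin].
  exfalso.
  pose proof (term_le_sum_range lo l (fun k => if F k then tower_elt (e k) else 0) k0 Hk0)
    as Hle.
  pose proof (tower_elt_pos (e k0)).
  simpl in Hle; rewrite HF in Hle; lia.
Qed.

End IdempotentUltrafilter.

Definition block_start (a : nat -> nat) (n : nat) : nat := sum_1_to (pred n) a.

Lemma block_start_succ a k : 1 <= k -> block_start a (S k) = block_start a k + a k.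
Proof. destruct k; [lia|reflexivity]. Qed.

Lemma block_start_mono a k : block_start a k <= block_start a (S k).
Proof. unfold block_start; destruct k; simpl; lia. Qed.

Lemma pred_le_block_start a n :
  (forall n, 1 <= n -> 1 <= a n) -> pred n <= block_start a n.
Proof.
  intros Ha; unfold block_start.
  induction (pred n) as [|k IHk]; simpl; [lia|].
  specialize (Ha (S k) ltac:(lia)); lia.
Qed.

Theorem theorem2p4
  (p : (nat -> Prop) -> Prop)
  (C : nat -> (nat -> Prop))
  (a : nat -> nat) :
  is_ultrafilter p ->
  idempotent p ->
  (forall n, 1 <= n -> p (C n)) ->
  (forall n, 1 <= n -> 1 <= a n) ->
  exists Y : nat -> nat -> nat,
    (* Y n = <Y n j>_{j=1}^{a n}, a sequence in N *)
    (forall n j, 1 <= n -> 1 <= j <= a n -> 1 <= Y n j) /\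
    (forall n, 1 <= n -> FS_sub (a n) (Y n) (C n)) /\
    (* for every nonempty finite F ⊆ N (F ⊆ {1..N}, indicator F) with
       minimum m, and every choice g n ∈ {1..a n} of a term of Y n for
       n ∈ F, sum_{n in F} Y n (g n) ∈ C m *)
    (forall (N : nat) (F : nat -> bool) (m : nat) (g : nat -> nat),
       1 <= m <= N -> F m = true ->
       (forall k, F k = true -> m <= k) ->
       (forall k, F k = true -> 1 <= g k <= a k) ->
       C m (sum_1_to N (fun k => if F k then Y k (g k) else 0))).
Proof.
  intros p_uf p_idem HC Ha.
  set (D := fun i x => forall n, 1 <= n <= S i -> C n x).
  pose proof (uf_bounded_inter p p_uf C HC) as D_mem.
  set (x := tower_elt p D).
  assert (tower_C : forall n t y,
             1 <= n -> block_start a n <= t -> tower p D t y -> C n y).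
  { intros n t y Hn Ht Hy; apply (tower_sub p D) in Hy.
    apply (proj1 Hy); pose proof (pred_le_block_start a n Ha); lia. }
  exists (fun n j => x (block_start a n + pred j)).
  split; [|split].
  - intros n j _ _; apply (tower_elt_pos p p_uf p_idem D D_mem).
  - intros n Hn H [j [Hj HHj]]; rewrite sum_1_to_range.
    apply (tower_C n (block_start a n + pred 1)); [exact Hn|lia|].
    apply (block_sum_in_tower p p_uf p_idem D D_mem
             (fun j => block_start a n + pred j) _ H 1 (a n) j); auto with arith; lia.
  - intros N F m g Hm HFm Hmin Hg; rewrite sum_1_to_range.
    replace N with (pred m + S (N - m)) by lia.
    rewrite sum_range_split, sum_range_zero, Nat.add_0_l
      by (intros k Hk; destruct (F k) eqn:HF; [apply Hmin in HF; lia|reflexivity]).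
    replace (1 + pred m) with m by lia.
    apply (tower_C m (block_start a m)); [lia|lia|].
    apply (block_sum_in_tower p p_uf p_idem D D_mem (block_start a)
             (fun k => block_start a k + pred (g k)) F m _ m);
      [apply block_start_mono| |lia|exact HFm].
    intros k Hk HF; specialize (Hg k HF); specialize (Hmin k HF).
    rewrite block_start_succ by lia; lia.
Qed.
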